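(* Let $G$ be a simple connected graph with vertices $v_1,\dots,v_n$ and edges $e_1,\dots,e_q$, with reduced incidence matrix $A(G)=[x_{ij}]$. For a set $S=\{t_1<t_2<\dots<t_{n-1}\}\subseteq\{1,\dots,q\}$, the edges $\{e_{t_1},\dots,e_{t_{n-1}}\}$ form a spanning tree of $G$ if and only if there is exactly one nonzero monomial of $A(G)$ with content $S$. Consequently, sending $S$ to the edge set $\{e_t : t\in S\}$ gives a one-to-one correspondence between the contents of uniquely occurring nonzero monomials of $A(G)$ and the (labeled) spanning trees of $G$.
   Context: The reduced incidence matrix $A(G)$ is the $(n-1)\times q$ matrix with $x_{ij}=1$ if $v_i$ is an endpoint of $e_j$ and $x_{ij}=0$ otherwise ($1\le i\le n-1$; the row of $v_n$ is deleted). A nonzero monomial of $A(G)$ is a product $x_{1j_1}x_{2j_2}\cdots x_{(n-1)j_{n-1}}$ with $j_1,\dots,j_{n-1}$ pairwise distinct column indices and every factor equal to $1$; its content (second index set) is $\{j_1,\dots,j_{n-1}\}$. A nonzero monomial is uniquely occurring if no other nonzero monomial has the same content. *)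

From mathcomp Require Import all_boot all_algebra.
Set Implicit Arguments. Unset Strict Implicit. Unset Printing Implicit Defensive.

(* A graph with n.+1 vertices v_1..v_{n+1} (type 'I_n.+1) and q edges
   e_1..e_q (type 'I_q); edge j has endpoints (ends j).1 and (ends j).2.
   The deleted row of the reduced incidence matrix is the last vertex
   (ord_max); row i : 'I_n corresponds to vertex widen_ord _ i. *)
Section Graph.
Variables (n q : nat) (ends : 'I_q -> 'I_n.+1 * 'I_n.+1).

Definition endpoint (v : 'I_n.+1) (j : 'I_q) : bool :=
  (v == (ends j).1) || (v == (ends j).2).

Definition edge_set (j : 'I_q) : {set 'I_n.+1} := [set (ends j).1; (ends j).2].

Definition simple_graph : Prop :=
  (forall j, (ends j).1 != (ends j).2) /\ injective edge_set.

Definition adj (T : {set 'I_q}) : rel 'I_n.+1 :=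
  fun u v => [exists j in T, edge_set j == [set u; v]] && (u != v).

Definition connected_sub (T : {set 'I_q}) : Prop :=
  forall u v, connect (adj T) u v.

Definition has_cycle (T : {set 'I_q}) : Prop :=
  exists c : seq 'I_n.+1, [/\ 3 <= size c, uniq c & cycle (adj T) c].

Definition spanning_tree (T : {set 'I_q}) : Prop :=
  connected_sub T /\ ~ has_cycle T.

Definition connected_graph : Prop := connected_sub setT.

Definition red_inc : 'M[nat]_(n, q) :=
  \matrix_(i < n, j < q) (endpoint (widen_ord (leqnSn n) i) j : nat).

(* nonzero monomial x_{1 f(1)} ... x_{n f(n)}: distinct column indices and
   every factor equal to 1 *)
Definition nz_monomial (f : {ffun 'I_n -> 'I_q}) : bool :=
  injectiveb f && [forall i, red_inc i (f i) == 1%N].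

Definition content (f : {ffun 'I_n -> 'I_q}) : {set 'I_q} := f @: 'I_n.

Definition uniquely_occurring (f : {ffun 'I_n -> 'I_q}) : Prop :=
  nz_monomial f /\
  forall g, nz_monomial g -> content g = content f -> g = f.

End Graph.

From mathcomp Require Import all_boot all_algebra.
Set Implicit Arguments. Unset Strict Implicit. Unset Printing Implicit Defensive.

(* A nonzero monomial assigns injectively to every vertex other than the
   deleted one an incident edge; moving each vertex across its edge defines a
   parent map.  In a connected edge set, edges along shortest paths to the
   deleted vertex give such an assignment; and two assignments with the same
   content differ on a parent-closed set of vertices, which carries a cycle
   of the content, so for a spanning tree the assignment is unique.
   Conversely, a cycle of the parent map is a cycle of the content, and
   shifting its edges one step along the cycle gives a second monomial with
   the same content.  Hence a unique monomial has connected content, which is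
   also acyclic: deleting an edge of a cycle keeps it connected with only
   n - 1 edges, too few to carry a monomial. *)

Lemma invariant_fcycle (T : finType) (h : T -> T) (P : {pred T}) x0 :
  x0 \in P -> {in P, forall x, h x \in P} ->
  {in P, forall x, h x != x} -> {in P, forall x, h (h x) != x} ->
  exists c : seq T, [/\ 2 < size c, uniq c & fcycle h c].
Proof.
move=> Px0 hP h1 h2.
have iterP k : iter k h x0 \in P by elim: k => //= k IHk; apply: hP.
have /trajectP[i lt_i_m iter_m] := looping_order h x0.
pose y := iter i h x0; pose k := order h x0 - i.
have def_m : order h x0 = i + k by rewrite subnKC // ltnW.
have y_periodic : iter k h y = y by rewrite /y -iterD addnC -def_m.
have k_gt0 : 0 < k by rewrite subn_gt0.
exists (traject h y k); split.
- rewrite size_traject; have Py : y \in P := iterP i.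
  case: k k_gt0 y_periodic {def_m} => [|[|[|k]]] // _ /= y_periodic.
  + by have := h1 y Py; rewrite y_periodic eqxx.
  + by have := h2 y Py; rewrite y_periodic eqxx.
- by have := orbit_uniq h x0; rewrite /orbit def_m trajectD cat_uniq => /and3P[].
- case: k k_gt0 y_periodic {def_m} => [|k] // _ y_periodic.
  rewrite /= -[in X in rcons _ X]y_periodic iterSr -trajectSr.
  exact: fpath_traject.
Qed.

Section ReducedIncidence.
Variables (n q : nat) (ends : 'I_q -> 'I_n.+1 * 'I_n.+1).
Hypothesis simpleG : simple_graph ends.
Implicit Types (f g : {ffun 'I_n -> 'I_q}) (S T : {set 'I_q}).

Definition vertex (i : 'I_n) : 'I_n.+1 := widen_ord (leqnSn n) i.

Definition opposite (j : 'I_q) (v : 'I_n.+1) : 'I_n.+1 :=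
  if v == (ends j).1 then (ends j).2 else (ends j).1.

Definition incident (f : {ffun 'I_n -> 'I_q}) : Prop :=
  forall i, endpoint ends (vertex i) (f i).

(* The vertex across the edge [f x] from [x]; [x] itself when that vertex is
   the deleted one, [ord_max]. *)
Definition parent (f : {ffun 'I_n -> 'I_q}) (x : 'I_n) : 'I_n :=
  insubd x (val (opposite (f x) (vertex x))).

Lemma vertex_inj : injective vertex.
Proof. by move=> i j /(congr1 val) /= /val_inj. Qed.

Lemma vertex_neq_max i : vertex i != ord_max.
Proof. by rewrite -val_eqE /= neq_ltn ltn_ord. Qed.

Lemma vertexP v : reflect (exists i, v = vertex i) (v != ord_max).
Proof.
apply: (iffP idP) => [v_max | [i ->]]; last exact: vertex_neq_max.
have lt_v_n : v < n by rewrite ltn_neqAle -ltnS ltn_ord andbT -val_eqE in v_max *.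
by exists (Ordinal lt_v_n); apply: val_inj.
Qed.

Lemma endpointE v j : endpoint ends v j = (v \in edge_set ends j).
Proof. by rewrite !inE. Qed.

Lemma endpoint_opposite v j : endpoint ends v j -> endpoint ends (opposite j v) j.
Proof. by rewrite /endpoint /opposite; case: ifP; rewrite eqxx ?orbT. Qed.

Lemma edge_set_endpoints v w j : endpoint ends v j -> endpoint ends w j -> v != w ->
  edge_set ends j = [set v; w].
Proof.
by case/orP=> /eqP-> /orP[] /eqP->; rewrite ?eqxx // => _; apply: setUC.
Qed.

Lemma opposite_eq v w j : endpoint ends v j -> endpoint ends w j -> v != w ->
  opposite j v = w.
Proof.
rewrite /opposite; case/orP=> /eqP-> /orP[] /eqP->; rewrite ?eqxx //.
by rewrite eq_sym => /negbTE ->.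
Qed.

Lemma opposite_neq v j : endpoint ends v j -> opposite j v != v.
Proof.
have [/(_ j) ends_neq _] := simpleG; rewrite /opposite.
case/orP=> /eqP->; first by rewrite eqxx eq_sym.
by case: ifP => // /eqP E; rewrite E eqxx in ends_neq.
Qed.

Lemma adj_sym T : symmetric (adj ends T).
Proof. by move=> u v; rewrite /adj setUC eq_sym. Qed.

Lemma adj_subset T S : T \subset S -> subrel (adj ends T) (adj ends S).
Proof.
move=> TS u v /andP[/existsP[j /andP[jT ej]] nuv].
by rewrite /adj nuv andbT; apply/existsP; exists j; rewrite (subsetP TS).
Qed.

Lemma adj_opposite T v j : j \in T -> endpoint ends v j ->
  adj ends T v (opposite j v).
Proof.
move=> jT vj; have nv := opposite_neq vj.
rewrite /adj eq_sym nv andbT; apply/existsP; exists j.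
by rewrite jT (edge_set_endpoints vj (endpoint_opposite vj)) 1?eq_sym ?eqxx.
Qed.

Lemma has_cycle_subset T S : T \subset S -> has_cycle ends T -> has_cycle ends S.
Proof.
move=> TS [c [c3 c_uniq c_cycle]]; exists c; split=> //.
exact: sub_cycle (adj_subset TS) _ c_cycle.
Qed.

Lemma nz_monomialP f : reflect (injective f /\ incident f) (nz_monomial ends f).
Proof.
apply: (iffP andP) => [[/injectiveP f_inj /forallP f_one] | [f_inj f_inc]].
  by split=> // i; move: (f_one i); rewrite mxE; case: endpoint.
split; first exact/injectiveP.
by apply/forallP => i; move: (f_inc i); rewrite mxE /vertex => ->.
Qed.

Lemma card_content f : injective f -> #|content f| = n.
Proof. by move=> f_inj; rewrite card_imset // card_ord. Qed.

Lemma content_subsetP f T :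
  reflect (forall i, f i \in T) (content f \subset T).
Proof.
apply: (iffP subsetP) => [fT i | fT _ /imsetP[i _ ->]]; last exact: fT.
by apply: fT; apply: imset_f.
Qed.

Lemma rooted_connected T :
  (forall i, connect (adj ends T) (vertex i) ord_max) -> connected_sub ends T.
Proof.
move=> rooted.
have to_max v : connect (adj ends T) v ord_max.
  case: (eqVneq v ord_max) => [-> | /vertexP[i ->]]; last exact: rooted.
  exact: connect0.
move=> u v; apply: connect_trans (to_max u) _.
by rewrite (sym_connect_sym (adj_sym T)).
Qed.

Section Parent.
Variable f : {ffun 'I_n -> 'I_q}.
Hypothesis f_inc : incident f.

Lemma parent_fixE x : (parent f x == x) = (opposite (f x) (vertex x) == ord_max).
Proof.
case: (eqVneq (opposite (f x) (vertex x)) ord_max) => [o_max | /vertexP[i o_i]].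
  by rewrite /parent o_max /insubd insubN ?ltnn ?eqxx.
rewrite /parent o_i /= valKd; apply/negbTE.
by rewrite -(inj_eq vertex_inj) -o_i; apply: opposite_neq.
Qed.

Lemma vertex_parent x : parent f x != x ->
  vertex (parent f x) = opposite (f x) (vertex x).
Proof. by rewrite parent_fixE => /vertexP[i o_i]; rewrite /parent o_i /= valKd. Qed.

Lemma endpoint_parent x : parent f x != x -> endpoint ends (vertex (parent f x)) (f x).
Proof. by move/vertex_parent->; apply: endpoint_opposite. Qed.

Lemma parent_eq x j : endpoint ends (vertex j) (f x) -> j != x -> parent f x = j.
Proof.
move=> j_end neq_jx.
have o_j : opposite (f x) (vertex x) = vertex j.
  by apply: opposite_eq; rewrite // (inj_eq vertex_inj) eq_sym.
have moved : parent f x != x by rewrite parent_fixE o_j vertex_neq_max.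
by apply: vertex_inj; rewrite vertex_parent.
Qed.

Lemma adj_parent T x : f x \in T -> parent f x != x ->
  adj ends T (vertex x) (vertex (parent f x)).
Proof. by move=> fxT /vertex_parent->; apply: adj_opposite. Qed.

Lemma parent_no_2cycle x : injective f -> parent f x != x -> parent f (parent f x) != x.
Proof.
move=> f_inj moved; apply/negP => /eqP back.
have moved' : parent f (parent f x) != parent f x by rewrite back eq_sym.
have x_neq : vertex x != vertex (parent f x) by rewrite (inj_eq vertex_inj) eq_sym.
have e_x := edge_set_endpoints (f_inc x) (endpoint_parent moved) x_neq.
have := endpoint_parent moved'; rewrite back => x_end.
have e_px := edge_set_endpoints x_end (f_inc _) x_neq.
have [_ edge_set_inj] := simpleG.
have /f_inj same := edge_set_inj _ _ (etrans e_x (esym e_px)).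
by rewrite -same eqxx in moved.
Qed.

End Parent.

Definition parent_cycle f (c : seq 'I_n) : Prop :=
  [/\ 2 < size c, uniq c & fcycle (parent f) c].

Lemma parent_cycle_moved f c x : parent_cycle f c -> x \in c -> parent f x != x.
Proof.
case=> c3 c_uniq c_cycle /rot_to[i p c_rot].
move: c3 c_uniq c_cycle; rewrite -(size_rot i) -(rot_uniq i) -(rot_cycle i) c_rot.
case: p {c_rot} => [|y p] //= _ /andP[]; rewrite inE negb_or => /andP[x_neq_y _] _.
by case/andP=> /eqP-> _; rewrite eq_sym.
Qed.

Lemma parent_cycle_has_cycle f T c : incident f -> (forall i, f i \in T) ->
  parent_cycle f c -> has_cycle ends T.
Proof.
move=> f_inc fT cyc; have [c3 c_uniq c_cycle] := cyc.
exists (map vertex c); split; rewrite ?size_map ?(map_inj_uniq vertex_inj) //.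
rewrite cycle_map; apply: (sub_in_cycle (P := mem c)) c_cycle; last exact: allss.
move=> x y xc _ /eqP <-; apply: adj_parent => //.
exact: parent_cycle_moved cyc xc.
Qed.

Lemma parent_cycle_rotate f c : nz_monomial ends f -> parent_cycle f c ->
  exists g, [/\ nz_monomial ends g, content g = content f & g != f].
Proof.
case/nz_monomialP=> f_inj f_inc cyc; have [c3 c_uniq c_cycle] := cyc.
have [x xc] : exists x, x \in c.
  by case: c c3 {cyc c_uniq c_cycle} => // x c _; exists x; apply: mem_head.
have parent_prev v : v \in c -> parent f (prev c v) = v.
  by move=> vc; apply/eqP; apply: (prev_cycle c_cycle vc).
have g_inc : incident [ffun v => f (prev c v)].
  move=> v; rewrite ffunE; have [vc | vNc] := boolP (v \in c); last first.
    by rewrite prev_nth (negbTE vNc); apply: f_inc.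
  rewrite -{1}(parent_prev v vc); apply: endpoint_parent => //.
  by apply: parent_cycle_moved cyc _; rewrite mem_prev.
have g_inj : injective [ffun v => f (prev c v)].
  by move=> u v; rewrite !ffunE => /f_inj/(can_inj (next_prev c_uniq)).
exists [ffun v => f (prev c v)]; split; first exact/nz_monomialP.
  apply/eqP; rewrite eqEcard !card_content // leqnn andbT.
  by apply/subsetP => _ /imsetP[v _ ->]; rewrite ffunE imset_f.
apply: contraNneq (parent_cycle_moved cyc xc) => /ffunP/(_ x).
by rewrite ffunE => /f_inj prev_x; rewrite -{1}prev_x parent_prev.
Qed.

Lemma connected_content_or_parent_cycle f : nz_monomial ends f ->
  connected_sub ends (content f) \/ exists c, parent_cycle f c.
Proof.
case/nz_monomialP=> f_inj f_inc.
pose stranded := [pred i | ~~ connect (adj ends (content f)) (vertex i) ord_max].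
have [x0 x0_stranded | rooted] := pickP stranded; last first.
  by left; apply: rooted_connected => i; apply/negbFE/rooted.
right.
have moved x : x \in stranded -> parent f x != x.
  rewrite inE (parent_fixE f_inc); apply: contra => /eqP o_max; apply: connect1.
  by rewrite -o_max; apply: adj_opposite (f_inc x); apply: imset_f.
have closed x : x \in stranded -> parent f x \in stranded.
  move=> x_str; move: (x_str) => /moved x_moved; apply: contra x_str.
  by apply: connect_trans; apply/connect1/adj_parent; rewrite ?imset_f.
have no_2cycle x : x \in stranded -> parent f (parent f x) != x.
  by move/moved; apply: parent_no_2cycle.
exact: invariant_fcycle x0_stranded closed moved no_2cycle.
Qed.

Lemma acyclic_monomial_unique f g : ~ has_cycle ends (content f) ->
  nz_monomial ends f -> nz_monomial ends g -> content g = content f -> g = f.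
Proof.
move=> acyc /nz_monomialP[f_inj f_inc] /nz_monomialP[g_inj g_inc] cgf.
pose differ := [pred i | f i != g i].
have [x0 x0_differ | same] := pickP differ; last first.
  by apply/ffunP => i; apply/esym/eqP/negbFE/same.
have shared x : x \in differ -> g (parent f x) = f x /\ parent f x != x.
  rewrite inE => fgx; have /imsetP[j _ fx_gj] : f x \in content g by rewrite cgf imset_f.
  have neq_jx : j != x by apply: contraNneq fgx => j_x; rewrite fx_gj j_x.
  by rewrite (parent_eq f_inc _ neq_jx) // fx_gj g_inc.
have moved x : x \in differ -> parent f x != x by case/shared.
have closed x : x \in differ -> parent f x \in differ.
  by case/shared=> gpx moved_x; rewrite inE gpx (inj_eq f_inj).
have no_2cycle x : x \in differ -> parent f (parent f x) != x.
  by move/moved; apply: parent_no_2cycle.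
have [c cyc] := invariant_fcycle x0_differ closed moved no_2cycle.
by case: acyc; apply: parent_cycle_has_cycle f_inc _ cyc => i; apply: imset_f.
Qed.

Section ShortestPaths.
Variable T : {set 'I_q}.
Hypothesis T_connected : connected_sub ends T.

Let reaches_in v k := [exists t : k.-tuple 'I_n.+1,
  path (adj ends T) v t && (last v t == ord_max)].

Let reaches v : exists k, reaches_in v k.
Proof.
case/connectP: (T_connected v ord_max) => p p_path p_last; exists (size p).
by apply/existsP; exists (in_tuple p); rewrite /= p_path -p_last eqxx.
Qed.

Let dist v := ex_minn (reaches v).

Lemma descending_edge i : exists j, exists w,
  [/\ j \in T, edge_set ends j = [set vertex i; w] & dist w < dist (vertex i)].
Proof.
rewrite /dist; case: (ex_minnP (reaches (vertex i))) => k.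
case/existsP=> [[s /eqP s_size]] /= /andP[s_path s_last] _.
case: s s_size s_path s_last => [|w p] /= <-.
  by rewrite (negbTE (vertex_neq_max i)).
case/andP=> /andP[/existsP[j /andP[jT /eqP ej]] _] p_path p_last.
exists j, w; split=> //; case: (ex_minnP (reaches w)) => m _; apply.
by apply/existsP; exists (in_tuple p); rewrite /= p_path.
Qed.

Lemma connected_monomial : exists2 f, nz_monomial ends f & content f \subset T.
Proof.
have [F F_edge] := fin_all_exists descending_edge.
exists [ffun i => F i]; last first.
  by apply/content_subsetP => i; rewrite ffunE; have [w []] := F_edge i.
apply/nz_monomialP; split=> [x y | i]; rewrite !ffunE; last first.
  by have [w [_ Fi _]] := F_edge i; rewrite endpointE Fi set21.
move=> Fxy; have [w1 [_ ex dx]] := F_edge x; have [w2 [_ ey dy]] := F_edge y.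
apply: vertex_inj.
have /set2P[-> // | x_w2] : vertex x \in [set vertex y; w2] by rewrite -ey -Fxy ex set21.
have /set2P[-> // | y_w1] : vertex y \in [set vertex x; w1] by rewrite -ex Fxy ey set21.
by rewrite x_w2 in dx; rewrite y_w1 in dy; have := ltn_trans dx dy; rewrite ltnn.
Qed.

End ShortestPaths.

Lemma proper_connected_has_cycle S T : T \proper S -> connected_sub ends T ->
  has_cycle ends S.
Proof.
case/properP=> TS [e eS eNT] T_conn; have [/(_ e) ends_neq edge_set_inj] := simpleG.
case/connectP: (T_conn (ends e).2 (ends e).1) => p p_path p_last.
case: (shortenP p_path) => p' p'_path p'_uniq _ in p_last *.
exists ((ends e).2 :: p'); split=> //.
  case: p' p_last p'_path {p'_uniq} => [|x [|y p']] //= e_last.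
    by rewrite e_last eqxx in ends_neq.
  case/andP=> /andP[/existsP[j /andP[jT /eqP ej]] _] _.
  suff j_e : j = e by rewrite -j_e jT in eNT.
  by apply: edge_set_inj; rewrite ej -e_last setUC.
rewrite /= rcons_path (sub_path (adj_subset TS) p'_path) -p_last /=.
rewrite /adj ends_neq andbT; apply/existsP; exists e.
by rewrite eS /edge_set eqxx.
Qed.

Lemma adj_setD1 S e x y : adj ends S x y -> edge_set ends e != [set x; y] ->
  adj ends (S :\ e) x y.
Proof.
case/andP=> /existsP[j /andP[jS /eqP ej]] nxy e_neq.
rewrite /adj nxy andbT; apply/existsP; exists j; rewrite !inE jS ej eqxx !andbT.
by apply: contra_neq e_neq => j_e; rewrite -j_e.
Qed.

Lemma connected_sub_setD1 S e u v : connected_sub ends S ->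
  edge_set ends e = [set u; v] -> connect (adj ends (S :\ e)) u v ->
  connected_sub ends (S :\ e).
Proof.
move=> S_conn e_uv uv x y; apply: connect_sub (S_conn x y) => {}x {}y xy.
have [e_xy | /(adj_setD1 xy)/connect1 //] := eqVneq (edge_set ends e) [set x; y].
have sym := sym_connect_sym (adj_sym (S :\ e)).
have: x \in [set u; v] by rewrite -e_uv e_xy set21.
have: y \in [set u; v] by rewrite -e_uv e_xy set22.
by case/set2P=> ->; case/set2P=> ->; rewrite ?connect0 // sym.
Qed.

Lemma has_cycle_connected_remove S : connected_sub ends S -> has_cycle ends S ->
  exists2 e, e \in S & connected_sub ends (S :\ e).
Proof.
move=> S_conn [[|a [|b [|c p]]] [// _ c_uniq c_cycle]].
have: path (adj ends S) a (rcons [:: b, c & p] a) := c_cycle.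
rewrite rcons_path => /andP[/andP[/andP[/existsP[e /andP[eS /eqP e_ab]] _] inner]].
rewrite [last _ _]/= => last_edge.
case/andP: c_uniq => a_out /andP[b_out _].
exists e => //; apply: (connected_sub_setD1 S_conn e_ab).
rewrite (sym_connect_sym (adj_sym _)); apply/connectP.
exists (rcons (c :: p) a); last by rewrite last_rcons.
rewrite rcons_path; apply/andP; split.
  have avoids_e : {in b :: c :: p &, subrel (adj ends S) (adj ends (S :\ e))}.
    move=> x y x_in y_in /adj_setD1; apply; apply: contraNneq a_out => e_xy.
    have: a \in [set x; y] by rewrite -e_xy e_ab set21.
    by case/set2P=> ->.
  exact: (sub_in_path (P := [in b :: c :: p]) avoids_e (allss _) inner).
apply: adj_setD1 last_edge _; apply: contraNneq b_out => e_la.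
have: b \in [set last c p; a] by rewrite -e_la e_ab set22.
case/set2P=> [-> | b_a]; first exact: mem_last.
by rewrite b_a mem_head in a_out.
Qed.

Lemma spanning_tree_monomial S : spanning_tree ends S ->
  exists2 f, nz_monomial ends f & content f = S.
Proof.
case=> S_conn S_acyc; have [f f_nz fS] := connected_monomial S_conn.
exists f => //; have /nz_monomialP[_ f_inc] := f_nz.
have f_conn : connected_sub ends (content f).
  case: (connected_content_or_parent_cycle f_nz) => // [[c cyc]].
  case: S_acyc; apply: has_cycle_subset fS _.
  by apply: parent_cycle_has_cycle f_inc _ cyc => i; apply: imset_f.
apply/eqP; rewrite eqEproper fS /=; apply/negP => f_proper.
exact: S_acyc (proper_connected_has_cycle f_proper f_conn).
Qed.

Lemma unique_monomial_spanning_tree f : nz_monomial ends f ->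
  (forall g, nz_monomial ends g -> content g = content f -> g = f) ->
  spanning_tree ends (content f).
Proof.
move=> f_nz f_unique.
have f_conn : connected_sub ends (content f).
  case: (connected_content_or_parent_cycle f_nz) => // [[c cyc]].
  have [g [g_nz cg g_neq]] := parent_cycle_rotate f_nz cyc.
  by rewrite (f_unique g g_nz cg) eqxx in g_neq.
split=> // /(has_cycle_connected_remove f_conn)[e e_in /connected_monomial[g g_nz gS]].
have /nz_monomialP[g_inj _] := g_nz; have /nz_monomialP[f_inj _] := f_nz.
have := leq_ltn_trans (subset_leq_card gS) (proper_card (properD1 e_in)).
by rewrite !card_content // ltnn.
Qed.

Definition monomials S : {set {ffun 'I_n -> 'I_q}} :=
  [set f | nz_monomial ends f && (content f == S)].

Lemma spanning_treeP S : spanning_tree ends S <-> exists f, monomials S = [set f].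
Proof.
split=> [S_tree | [f mS]].
  have [f f_nz cf] := spanning_tree_monomial S_tree.
  exists f; apply/setP => g; rewrite !inE; apply/andP/eqP => [[g_nz /eqP cg] | ->].
    by apply: acyclic_monomial_unique g_nz _; rewrite ?cf ?cg //; case: S_tree.
  by rewrite f_nz cf.
have /setIdP[f_nz /eqP cf] : f \in monomials S by rewrite mS set11.
rewrite -cf; apply: unique_monomial_spanning_tree f_nz _ => g g_nz cg.
by apply/set1P; rewrite -mS inE g_nz cg cf eqxx.
Qed.

Lemma uniquely_occurringE f S :
  uniquely_occurring ends f /\ content f = S <-> monomials S = [set f].
Proof.
split=> [[[f_nz f_unique] cf] | mS].
  apply/setP => g; rewrite !inE; apply/andP/eqP => [[g_nz /eqP cg] | ->].
    by apply: f_unique; rewrite ?cg.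
  by rewrite f_nz cf.
have /setIdP[f_nz /eqP cf] : f \in monomials S by rewrite mS set11.
split=> //; split=> // g g_nz cg.
by apply/set1P; rewrite -mS inE g_nz cg cf eqxx.
Qed.

End ReducedIncidence.

Theorem theorem2p2 (n q : nat) (ends : 'I_q -> 'I_n.+1 * 'I_n.+1) :
  simple_graph ends -> connected_graph ends ->
  (forall S : {set 'I_q}, #|S| = n ->
     (spanning_tree ends S <->
      #|[set f : {ffun 'I_n -> 'I_q} | nz_monomial ends f && (content f == S)]| = 1%N))
  /\
  (forall S : {set 'I_q},
     (exists f, uniquely_occurring ends f /\ content f = S) <-> spanning_tree ends S).
Proof.
move=> simpleG _; split=> [S _ | S].
  apply: iff_trans (spanning_treeP simpleG S) _.
  split=> [[f mS] | /eqP/cards1P//].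
  by rewrite -[LHS]/#|monomials ends S| mS cards1.
apply: iff_trans (iff_sym (spanning_treeP simpleG S)).
by split=> [] [f /uniquely_occurringE mS]; exists f.
Qed.
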